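(* For every $n\ge 4$, $$h_3(n,\{(4,0),(4,1),(4,3)\}) = \begin{cases} \dfrac{n}{2} & \text{if } n\equiv 0 \pmod 6,\\[2mm] \left\lceil \dfrac{n+1}{2}\right\rceil & \text{if } n\not\equiv 0 \pmod 6.\end{cases}$$
   Context: For an $r$-uniform hypergraph ($r$-graph) $H$, a homogeneous set is a set of vertices that is either a clique (every $r$-subset is an edge) or a coclique (no $r$-subset is an edge); $h(H)$ denotes the size of a largest homogeneous set. An $(m,f)$-graph is an $r$-graph with $m$ vertices and $f$ edges; $H$ is $(m,f)$-free if it contains no induced sub-hypergraph that is an $(m,f)$-graph. For a set $Q$ of pairs $(m,f)$, $H$ is $Q$-free if it is $(m,f)$-free for every $(m,f)\in Q$. $h_r(n,Q)$ is the minimum of $h(H)$ over all $n$-vertex $Q$-free $r$-graphs $H$. *)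

From mathcomp Require Import all_boot.
Set Implicit Arguments. Unset Strict Implicit. Unset Printing Implicit Defensive.

Definition uniform (r n : nat) (E : {set {set 'I_n}}) : bool :=
  [forall e in E, #|e| == r].

Definition is_clique (r n : nat) (E : {set {set 'I_n}}) (S : {set 'I_n}) : bool :=
  [forall e : {set 'I_n}, ((e \subset S) && (#|e| == r)) ==> (e \in E)].

Definition is_coclique (r n : nat) (E : {set {set 'I_n}}) (S : {set 'I_n}) : bool :=
  [forall e : {set 'I_n}, ((e \subset S) && (#|e| == r)) ==> (e \notin E)].

Definition homogeneous (r n : nat) (E : {set {set 'I_n}}) (S : {set 'I_n}) : bool :=
  is_clique r E S || is_coclique r E S.

Definition hom_num (r n : nat) (E : {set {set 'I_n}}) : nat :=
  \max_(S : {set 'I_n} | homogeneous r E S) #|S|.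

Definition has_induced (n : nat) (E : {set {set 'I_n}}) (m f : nat) : bool :=
  [exists S : {set 'I_n}, (#|S| == m) && (#|[set e in E | e \subset S]| == f)].

Definition Qfree (n : nat) (E : {set {set 'I_n}}) (Q : seq (nat * nat)) : bool :=
  all (fun mf => ~~ has_induced E mf.1 mf.2) Q.

(* h_r(n,Q): minimum of h(H) over all n-vertex Q-free r-graphs H.
   (Default value n if there is none; h(H) <= n always.) *)
Definition h_r (r n : nat) (Q : seq (nat * nat)) : nat :=
  \big[minn/n]_(E : {set {set 'I_n}} | uniform r E && Qfree E Q) hom_num r E.

From mathcomp Require Import all_boot.
From mathcomp Require Import zify.
Set Implicit Arguments. Unset Strict Implicit. Unset Printing Implicit Defensive.

(* A 3-graph is Q-free iff every 4-set spans 2 or 4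
   edges.  Fix a vertex v and join x, y (both distinct from v) when vxy is NOT
   an edge.  In the resulting "link graph" G, v is isolated, the edges of the
   3-graph are exactly the triples spanning an even number of G-edges, and the
   absence of edgeless 4-sets says that G has no odd quadruple (a 4-set all of
   whose triples are odd).  Cliques of the 3-graph are the even sets of G.

   G has no triangle.  Take x of
   maximum degree.  If the non-neighbours of x are independent, they and
   {v} + N(x) are two independent sets of total size n + 1.  Otherwise G has an
   induced 5-cycle, and exhaustive checks on 7 and 8 vertices show that G is a
   blow-up of C5 plus an isolated class; ten even unions of three classes
   then give 2h >= n, with equality only when 6 | n.

   Upper bound.  Blowing up C5 plus an isolated class by residues mod 6 gives
   a Q-free 3-graph whose cliques lie in one of those ten unions and whose
   cocliques have at most 3 vertices. *)

Lemma uniq3E (T : eqType) (a b c : T) :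
  uniq [:: a; b; c] -> [/\ a != b, a != c & b != c].
Proof. by rewrite /= !inE !negb_or => /and3P [/andP [-> ->] -> _]. Qed.

Lemma uniq4E (T : eqType) (a b c d : T) : uniq [:: a; b; c; d] ->
  [/\ a != b, a != c, a != d, b != c & b != d] /\ c != d.
Proof. by rewrite /= !inE !negb_or => /and4P [/and3P [-> -> ->] /andP [-> ->] -> _]. Qed.

Lemma uniq4_eqF (T : eqType) (a b c d : T) : uniq [:: a; b; c; d] ->
  ((a == b) = false) * ((a == c) = false) * ((a == d) = false) * ((b == c) = false)
  * ((b == d) = false) * ((c == d) = false) * ((b == a) = false) * ((c == a) = false)
  * ((d == a) = false) * ((c == b) = false) * ((d == b) = false) * ((d == c) = false).
Proof.
move=> /uniq4E [[ab ac ad bc bd] cd].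
by repeat split; apply/negbTE; rewrite // eq_sym.
Qed.

Lemma card_set3 (T : finType) (a b c : T) : uniq [:: a; b; c] -> #|[set a; b; c]| = 3.
Proof.
move=> U; have -> : [set a; b; c] = [set x in [:: a; b; c]].
  by apply/setP => x; rewrite !inE -!orbA.
by rewrite cardsE; move/card_uniqP: U.
Qed.

Lemma card_set4 (T : finType) (a b c d : T) :
  uniq [:: a; b; c; d] -> #|[set a; b; c; d]| = 4.
Proof.
move=> U; have -> : [set a; b; c; d] = [set x in [:: a; b; c; d]].
  by apply/setP => x; rewrite !inE -!orbA.
by rewrite cardsE; move/card_uniqP: U.
Qed.

Lemma set3_swap12 (T : finType) (a b c : T) : [set a; b; c] = [set b; a; c].
Proof. by apply/setP => w; rewrite !inE (orbC (w == a)). Qed.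

Lemma set3_swap23 (T : finType) (a b c : T) : [set a; b; c] = [set a; c; b].
Proof. by apply/setP => w; rewrite !inE -!orbA (orbC (w == b)). Qed.

Lemma card3P (T : finType) (e : {set T}) : #|e| = 3 ->
  exists a b c, uniq [:: a; b; c] /\ e = [set a; b; c].
Proof.
rewrite cardE -{2}(set_enum e); move: (enum_uniq (mem e)).
case: (enum e) => [|a [|b [|c [|d r]]]] // U _; exists a, b, c; split => //.
by apply/setP => x; rewrite !inE -!orbA.
Qed.

Lemma card4P (T : finType) (e : {set T}) : #|e| = 4 ->
  exists a b c d, uniq [:: a; b; c; d] /\ e = [set a; b; c; d].
Proof.
rewrite cardE -{2}(set_enum e); move: (enum_uniq (mem e)).
case: (enum e) => [|a [|b [|c [|d [|f r]]]]] // U _; exists a, b, c, d; split => //.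
by apply/setP => x; rewrite !inE -!orbA.
Qed.

Lemma card_ge4P (T : finType) (S : {set T}) : 4 <= #|S| ->
  exists a b c d, [/\ uniq [:: a; b; c; d], a \in S, b \in S, c \in S & d \in S].
Proof.
rewrite cardE; have mS x : (x \in S) = (x \in enum S) by rewrite mem_enum.
move: (enum_uniq (mem S)) mS; case: (enum S) => [|a [|b [|c [|d r]]]] // U mS _.
exists a, b, c, d; split; rewrite ?mS ?inE ?eqxx ?orbT //.
by move: U; rewrite -[_ :: _]/([:: a; b; c; d] ++ r) cat_uniq => /andP [].
Qed.

Lemma subset4_triples (T : finType) (a b c d : T) (e : {set T}) :
  uniq [:: a; b; c; d] -> #|e| = 3 -> e \subset [set a; b; c; d] ->
  e \in [:: [set a; b; c]; [set a; b; d]; [set a; c; d]; [set b; c; d]].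
Proof.
move=> U e3 eS.
have : #|[set a; b; c; d] :\: e| = 1 by rewrite cardsD (setIidPr eS) card_set4 ?e3.
move/eqP/cards1P => [x Sx].
have Sx' y : (y \notin e) && (y \in [set a; b; c; d]) = (y == x).
  by have := congr1 (fun A : {set T} => y \in A) Sx; rewrite !inE.
have -> : e = [set a; b; c; d] :\ x.
  apply/setP => y; rewrite in_setD1 -Sx'.
  by case: (boolP (y \in e)) => [/(subsetP eS) -> | _] //=; case: (_ \in _).
have : x \in [set a; b; c; d] by move: (Sx' x); rewrite eqxx => /andP [].
have neq := uniq4_eqF U.
rewrite !inE -!orbA => /or4P [] /eqP ->; apply/or4P.
- by constructor 4; apply/eqP/setP => y; rewrite !inE;
    case: (eqVneq y a) => [->|/negbTE ya]; rewrite ?eqxx ?ya ?neq.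
- by constructor 3; apply/eqP/setP => y; rewrite !inE;
    case: (eqVneq y b) => [->|/negbTE yb]; rewrite ?eqxx ?yb ?neq ?orbF.
- by constructor 2; apply/eqP/setP => y; rewrite !inE;
    case: (eqVneq y c) => [->|/negbTE yc]; rewrite ?eqxx ?yc ?neq ?orbF.
- by constructor 1; apply/eqP/setP => y; rewrite !inE;
    case: (eqVneq y d) => [->|/negbTE yd]; rewrite ?eqxx ?yd ?neq ?orbF.
Qed.

Lemma uniform_card r n (E : {set {set 'I_n}}) :
  uniform r E -> {in E, forall e : {set 'I_n}, #|e| = r}.
Proof. by move=> /forallP unifE e eE; apply/eqP; move/implyP: (unifE e); apply. Qed.

Lemma card_triples_in4 (T : finType) (E : {set {set T}}) (a b c d : T) :
  {in E, forall e : {set T}, #|e| = 3} -> uniq [:: a; b; c; d] ->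
  #|[set e in E | e \subset [set a; b; c; d]]| =
  ([set a; b; c] \in E) + ([set a; b; d] \in E) + ([set a; c; d] \in E)
    + ([set b; c; d] \in E).
Proof.
move=> E3 U; have neq := uniq4_eqF U.
set L := [:: [set a; b; c]; [set a; b; d]; [set a; c; d]; [set b; c; d]].
have UL : uniq L.
  rewrite /L /= !inE !negb_or !andbT; do ![apply/andP; split];
  apply/negP => /eqP /setP Hs; move: (Hs a) (Hs b) (Hs c) (Hs d);
  by rewrite !inE !eqxx ?neq ?orbT ?orbF => *.
have -> : [set e in E | e \subset [set a; b; c; d]] = [set e in filter (mem E) L].
  apply/setP => e; rewrite !in_set mem_filter.
  apply/andP/andP => [[eE eS] | [eE eL]]; split => //; first exact: subset4_triples (E3 e eE) eS.
  move: eL; rewrite !inE => /or4P [] /eqP ->; apply/subsetP => y;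
  by rewrite !inE -!orbA => /or3P [] ->; rewrite ?orbT.
rewrite cardsE (card_uniqP (filter_uniq _ UL)) size_filter /=.
by rewrite !addnA addn0.
Qed.

(* For a relation F, a triple is odd when it
   spans an odd number of F-edges; an odd quadruple is a 4-set all of whose
   triples are odd (for a graph: a perfect matching, a triangle plus a point,
   or a complete graph). *)

Definition odd_triple (T : Type) (F : T -> T -> bool) (a b c : T) : bool :=
  odd (F a b + F a c + F b c).

Definition odd_quad (T : Type) (F : T -> T -> bool) (a b c d : T) : bool :=
  [&& odd_triple F a b c, odd_triple F a b d, odd_triple F a c d & odd_triple F b c d].

Lemma odd_triple_set (T : finType) (F : T -> T -> bool) (a b c a' b' c' : T) :
  (forall x y, F x y = F y x) -> uniq [:: a; b; c] -> uniq [:: a'; b'; c'] ->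
  [set a; b; c] = [set a'; b'; c'] -> odd_triple F a b c = odd_triple F a' b' c'.
Proof.
move=> Fsym U U' E.
have m x : x \in [set a'; b'; c'] -> [|| x == a, x == b | x == c] by rewrite -E !inE -orbA.
have ma : [|| a' == a, a' == b | a' == c] by apply: m; rewrite !inE eqxx.
have mb : [|| b' == a, b' == b | b' == c] by apply: m; rewrite !inE eqxx ?orbT.
have mc : [|| c' == a, c' == b | c' == c] by apply: m; rewrite !inE eqxx ?orbT.
rewrite /odd_triple.
move: ma mb mc => /or3P [] /eqP E3 /or3P [] /eqP E2 /or3P [] /eqP E1 //; subst;
  move: U'; rewrite /= ?inE ?eqxx ?orbT /= ?andbF //= => _;
  rewrite ?(Fsym b a) ?(Fsym c a) ?(Fsym c b); congr (odd _); lia.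
Qed.

(* The cycle has vertices 0..4 with i ~ i+1 mod 5.
   Vertices of the blow-up carry a type: type 0 is an isolated class and type
   i.+1 is the class of cycle vertex i, so types 1..5 again form a 5-cycle. *)

Definition c5 (i j : nat) : bool :=
  (i < 5) && (j < 5) && ((j == (i + 1) %% 5) || (i == (j + 1) %% 5)).

Definition type_adj (t u : nat) : bool := (0 < t) && (0 < u) && c5 t.-1 u.-1.

Lemma type_adj_sym t u : type_adj t u = type_adj u t.
Proof. by rewrite /type_adj /c5 orbC [(0 < t) && _]andbC [(t.-1 < 5) && _]andbC. Qed.

Lemma type_adj_irr t : type_adj t t = false.
Proof.
rewrite /type_adj /c5; case: t => //= t.
by case: (ltnP t 5) => // t5; move: t5; do 5 (case: t => [|t] //).
Qed.

Definition type_row (t : nat) : seq bool := [seq type_adj t j.+1 | j <- iota 0 5].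

(* The type 1..5 whose row is b, or 0 if there is none. *)
Definition row_type (b : seq bool) : nat :=
  let k := find (fun t => b == type_row t) (iota 1 5) in if k < 5 then k.+1 else 0.

(* b is the row of its own type, i.e. b is the row of some type 0..5. *)
Definition typed_row (b : seq bool) : bool := b == type_row (row_type b).

Lemma row_type_lt6 b : row_type b < 6.
Proof. by rewrite /row_type; case: ifP. Qed.

Lemma row_typeK t : t < 6 -> row_type (type_row t) = t.
Proof. by do 6 (case: t => [|t] //). Qed.

Lemma typed_type_row t : t < 6 -> typed_row (type_row t).
Proof. by move=> t6; rewrite /typed_row row_typeK. Qed.

Lemma nth_map_iota (T : Type) (f : nat -> T) x0 k j :
  j < k -> nth x0 [seq f i | i <- iota 0 k] j = f j.
Proof. by move=> jk; rewrite (nth_map 0) ?size_iota // nth_iota. Qed.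

Lemma typed_rowP b j : typed_row b -> j < 5 -> nth false b j = type_adj (row_type b) j.+1.
Proof. by move=> /eqP {1}-> j5; rewrite nth_map_iota. Qed.

(* The cycle on 0..4, an isolated vertex 5, and vertices 6 and 7 whose
   neighbourhoods on the cycle are given by the rows b1 and b2, adjacent iff e. *)
Definition c5_plus2 (b1 b2 : seq bool) (e : bool) (i j : nat) : bool :=
  let row k := if k == 6 then b1 else b2 in
  if i == j then false else
  if (i < 5) && (j < 5) then c5 i j else
  if (5 < i < 8) && (j < 5) then nth false (row i) j else
  if (5 < j < 8) && (i < 5) then nth false (row j) i else
  [&& 5 < i < 8, 5 < j < 8 & e].

Definition all_quads (k : nat) (P : nat -> nat -> nat -> nat -> bool) : bool :=
  all (fun i => all (fun j => all (fun l => all (fun m =>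
    [&& i < j, j < l & l < m] ==> P i j l m) (iota 0 k)) (iota 0 k)) (iota 0 k)) (iota 0 k).

Lemma all_quadsP k (P : nat -> nat -> nat -> nat -> bool) :
  (forall i j l m, i < j -> j < l -> l < m -> m < k -> P i j l m) -> all_quads k P.
Proof.
move=> H; apply/allP => i _; apply/allP => j _; apply/allP => l _; apply/allP => m.
by rewrite mem_iota add0n => mk; apply/implyP => /and3P [ij jl lm]; apply: H.
Qed.

Fixpoint all_rows (k : nat) : seq (seq bool) :=
  if k is k'.+1 then [seq b :: s | b <- [:: false; true], s <- all_rows k'] else [:: [::]].

Lemma all_rowsP k (s : seq bool) : size s = k -> s \in all_rows k.
Proof.
elim: k s => [|k IH] [|b s] //= [] /IH H.
by case: b; rewrite /= ?mem_cat map_f ?orbT.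
Qed.

(* Exhaustive check: a vertex 6 added to (C5 + isolated vertex 5) without
   creating an odd quadruple has the row of one of the six types. *)
Definition one_vertex_check : bool :=
  all (fun b => all_quads 7 (fun i j l m => ~~ odd_quad (c5_plus2 b [::] false) i j l m)
                ==> typed_row b) (all_rows 5).

Lemma one_vertex_check_ok : one_vertex_check.
Proof. vm_cast_no_check (erefl true). Qed.

Definition two_vertex_check : bool :=
  all (fun b1 => all (fun b2 => all (fun e =>
    if typed_row b1 && typed_row b2 then
      all_quads 8 (fun i j l m => ~~ odd_quad (c5_plus2 b1 b2 e) i j l m)
      ==> (e == type_adj (row_type b1) (row_type b2))
    else true)
    [:: false; true]) (all_rows 5)) (all_rows 5).

Lemma two_vertex_check_ok : two_vertex_check.
Proof. vm_cast_no_check (erefl true). Qed.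

Lemma c5_extension_typed b : size b = 5 ->
  (forall i j l m, i < j -> j < l -> l < m -> m < 7 ->
     ~~ odd_quad (c5_plus2 b [::] false) i j l m) ->
  typed_row b.
Proof.
move=> b5 H; have /allP /(_ b (all_rowsP b5)) := one_vertex_check_ok.
by rewrite (all_quadsP H).
Qed.

Lemma c5_extension_adj b1 b2 e : typed_row b1 -> typed_row b2 ->
  (forall i j l m, i < j -> j < l -> l < m -> m < 8 -> ~~ odd_quad (c5_plus2 b1 b2 e) i j l m) ->
  e = type_adj (row_type b1) (row_type b2).
Proof.
move=> T1 T2 H.
have size_typed b : typed_row b -> size b = 5 by move/eqP ->; rewrite size_map size_iota.
have /allP /(_ b1 (all_rowsP (size_typed _ T1))) /allP /(_ b2 (all_rowsP (size_typed _ T2)))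
  := two_vertex_check_ok.
have eb : e \in [:: false; true] by rewrite !inE; case: (e).
by move=> /allP /(_ e eb); rewrite T1 T2 (all_quadsP H) => /eqP.
Qed.

Lemma odd_quad_free_induced (T : eqType) (F : T -> T -> bool) (s : seq T) x0
    (A : nat -> nat -> bool) :
  uniq s -> (forall i j, i < size s -> j < size s -> A i j = F (nth x0 s i) (nth x0 s j)) ->
  (forall a b c d, uniq [:: a; b; c; d] -> ~~ odd_quad F a b c d) ->
  forall i j l m, i < j -> j < l -> l < m -> m < size s -> ~~ odd_quad A i j l m.
Proof.
move=> U As NQ i j l m ij jl lm ms.
have [iS jS lS] : [/\ i < size s, j < size s & l < size s] by split; lia.
have ne p q : p < size s -> q < size s -> p != q -> nth x0 s p != nth x0 s q.
  by move=> ps qs; rewrite nth_uniq.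
rewrite /odd_quad /odd_triple !As //; apply: NQ.
by rewrite /= !inE !negb_or !ne //; lia.
Qed.

Definition even_set (T : finType) (F : T -> T -> bool) (S : {set T}) : Prop :=
  forall a b c, a \in S -> b \in S -> c \in S -> uniq [:: a; b; c] -> ~~ odd_triple F a b c.

Definition h_value (n : nat) : nat := if 6 %| n then n %/ 2 else (n + 2) %/ 2.

Lemma card_preimage_seq (T : finType) (V : eqType) (f : T -> V) (L : seq V) : uniq L ->
  #|[set y | f y \in L]| = \sum_(t <- L) #|[set y | f y == t]|.
Proof.
elim: L => [_|t L IH /= /andP [tL U]]; first by rewrite big_nil; apply: eq_card0 => y; rewrite !inE.
rewrite big_cons -IH // -cardsUI.
have -> : [set y | f y \in t :: L] = [set y | f y == t] :|: [set y | f y \in L].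
  by apply/setP => y; rewrite !inE.
have -> : [set y | f y == t] :&: [set y | f y \in L] = set0.
  by apply/setP => y; rewrite !inE; case: eqP => // ->; rewrite (negbTE tL).
by rewrite cards0 addn0.
Qed.

Section OddQuadFreeGraph.

Variables (n : nat) (F : 'I_n -> 'I_n -> bool) (v : 'I_n) (h : nat).
Hypothesis F_sym : forall x y, F x y = F y x.
Hypothesis F_irr : forall x, F x x = false.
Hypothesis v_isolated : forall x, F v x = false.
Hypothesis F_no_odd_quad : forall a b c d, uniq [:: a; b; c; d] -> ~~ odd_quad F a b c d.
Hypothesis even_le_h : forall S : {set 'I_n}, even_set F S -> #|S| <= h.

Section InducedC5.

(* Suppose c 0, ..., c 4 induce a 5-cycle.  Every vertex then has a type. *)
Variable c : nat -> 'I_n.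
Hypothesis c_C5 : forall i j, i < 5 -> j < 5 -> F (c i) (c j) = c5 i j.

Definition profile (y : 'I_n) : seq bool := [seq F y (c j) | j <- iota 0 5].
Definition vtype (y : 'I_n) : nat := row_type (profile y).

Lemma profile_cycle i : i < 5 -> profile (c i) = type_row i.+1.
Proof. by move=> i5; apply/eq_in_map => j; rewrite mem_iota => /andP [_ j5]; exact: c_C5. Qed.

Lemma vtype_cycle i : i < 5 -> vtype (c i) = i.+1.
Proof. by move=> i5; rewrite /vtype profile_cycle // row_typeK. Qed.

Lemma profile_v : profile v = type_row 0.
Proof. by apply/eq_map => j; rewrite v_isolated. Qed.

Lemma vtype_v : vtype v = 0.
Proof. by rewrite /vtype profile_v. Qed.

Definition core : seq 'I_n := [:: c 0; c 1; c 2; c 3; c 4; v].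

Lemma uniq_core : uniq core.
Proof. by apply: (@map_uniq _ _ vtype); rewrite /= !vtype_cycle ?vtype_v. Qed.

Lemma core_cases y : y \in core -> y = v \/ exists2 i, i < 5 & y = c i.
Proof.
rewrite /core !inE => /or4P [| | |/or3P []] /eqP ->;
  by [right; exists 0 | right; exists 1 | right; exists 2 | right; exists 3
     | right; exists 4 | left].
Qed.

Lemma profile_typed y : typed_row (profile y).
Proof.
case: (boolP (y \in core)) => [/core_cases [-> | [i i5 ->]] | yo].
- by rewrite profile_v typed_type_row.
- by rewrite profile_cycle // typed_type_row.
apply: c5_extension_typed; first by rewrite size_map size_iota.
apply: (@odd_quad_free_induced _ F (rcons core y) v) => //.
  by rewrite rcons_uniq yo uniq_core.
move=> i j; rewrite size_rcons => i7 j7.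
case: i i7 => [|[|[|[|[|[|[|i]]]]]]] // _; case: j j7 => [|[|[|[|[|[|[|j]]]]]]] // _;
  rewrite /c5_plus2 /= ?F_irr ?c_C5 ?v_isolated //; by rewrite F_sym ?v_isolated.
Qed.

Lemma F_by_type y z : F y z = type_adj (vtype y) (vtype z).
Proof.
have cycle_adj i x : i < 5 -> F (c i) x = type_adj i.+1 (vtype x).
  move=> i5; rewrite F_sym type_adj_sym -typed_rowP ?profile_typed //.
  by rewrite /profile nth_map_iota.
case: (eqVneq y z) => [-> | yz]; first by rewrite F_irr type_adj_irr.
case: (boolP (y \in core)) => [/core_cases [-> | [i i5 ->]] | yo].
  by rewrite v_isolated vtype_v.
  by rewrite cycle_adj ?vtype_cycle.
case: (boolP (z \in core)) => [/core_cases [-> | [i i5 ->]] | zo].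
  by rewrite F_sym v_isolated vtype_v type_adj_sym.
  by rewrite F_sym cycle_adj ?vtype_cycle // type_adj_sym.
apply: c5_extension_adj; rewrite ?profile_typed //.
apply: (@odd_quad_free_induced _ F (core ++ [:: y; z]) v) => //.
  by rewrite cat_uniq uniq_core /= mem_seq1 yz orbF !andbT; apply/norP; split.
move=> i j; rewrite size_cat => i8 j8.
case: i i8 => [|[|[|[|[|[|[|[|i]]]]]]]] // _; case: j j8 => [|[|[|[|[|[|[|[|j]]]]]]]] // _;
  rewrite /c5_plus2 /= ?F_irr ?c_C5 ?v_isolated //; by rewrite F_sym ?v_isolated.
Qed.

Definition type_class (t : nat) : {set 'I_n} := [set y | vtype y == t].

Lemma even_type_union (L : seq nat) : uniq L ->
  all (fun t1 => all (fun t2 => all (fun t3 => ~~ odd_triple type_adj t1 t2 t3) L) L) L ->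
  \sum_(t <- L) #|type_class t| <= h.
Proof.
move=> U A; rewrite -card_preimage_seq //; apply: even_le_h => a b d.
rewrite !inE => aL bL dL _; rewrite /odd_triple !F_by_type.
exact: (allP (allP (allP A _ aL) _ bL) _ dL).
Qed.

Lemma type_classes_cover : \sum_(t <- iota 0 6) #|type_class t| = n.
Proof.
rewrite -card_preimage_seq ?iota_uniq // -[RHS]card_ord -cardsT.
by apply: eq_card => y; rewrite in_set in_setT mem_iota /vtype row_type_lt6.
Qed.

(* Ten even unions of three classes: five of consecutive nonzero types and
   five of the form {0, t, t+2}.  Summing them gives 2h >= n, with equality
   forcing 6 | n. *)
Lemma C5_bound : h_value n <= h.
Proof.
have e1 := even_type_union (L := [:: 1; 2; 3]) isT isT.
have e2 := even_type_union (L := [:: 2; 3; 4]) isT isT.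
have e3 := even_type_union (L := [:: 3; 4; 5]) isT isT.
have e4 := even_type_union (L := [:: 4; 5; 1]) isT isT.
have e5 := even_type_union (L := [:: 5; 1; 2]) isT isT.
have f1 := even_type_union (L := [:: 0; 1; 3]) isT isT.
have f2 := even_type_union (L := [:: 0; 2; 4]) isT isT.
have f3 := even_type_union (L := [:: 0; 3; 5]) isT isT.
have f4 := even_type_union (L := [:: 0; 4; 1]) isT isT.
have f5 := even_type_union (L := [:: 0; 5; 2]) isT isT.
move: e1 e2 e3 e4 e5 f1 f2 f3 f4 f5 type_classes_cover; rewrite /= !big_cons !big_nil.
move: #|type_class 0| #|type_class 1| #|type_class 2| #|type_class 3| #|type_class 4|
  #|type_class 5| => c0 c1 c2 c3 c4 c5.
by rewrite /h_value; case: ifP => div6; lia.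
Qed.

End InducedC5.

(* Since v is isolated, a triangle together with v would be an odd quadruple. *)
Lemma triangle_free a b d : F a b -> F b d -> F a d -> False.
Proof.
move=> ab bd ad.
have ne x y : F x y -> x != y /\ x != v.
  by move=> xy; split; apply/eqP => E; move: xy; rewrite E ?F_irr ?v_isolated.
have [[ab' av] [bd' bv] [ad' _]] := And3 (ne _ _ ab) (ne _ _ bd) (ne _ _ ad).
have [_ dv] : d != b /\ d != v by apply: ne; rewrite F_sym.
have U : uniq [:: v; a; b; d] by rewrite /= !inE !negb_or !(eq_sym v) av bv dv ab' ad' bd'.
by have := F_no_odd_quad U; rewrite /odd_quad /odd_triple !v_isolated ab bd ad.
Qed.

Lemma no_induced_matching a b c d : uniq [:: a; b; c; d] -> F a b -> F c d ->
  [|| F a c, F a d, F b c | F b d].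
Proof.
move=> U ab cd; apply/negPn/negP; rewrite !negb_or.
move=> /and4P [/negbTE ac /negbTE ad /negbTE bc /negbTE bd].
by have := F_no_odd_quad U; rewrite /odd_quad /odd_triple ab cd ac ad bc bd.
Qed.

Lemma independent_le_h (S : {set 'I_n}) : {in S &, forall a b, F a b = false} -> #|S| <= h.
Proof. by move=> indS; apply: even_le_h => a b d aS bS dS _; rewrite /odd_triple !indS. Qed.

Definition nbhd (x : 'I_n) : {set 'I_n} := [set u | F x u].

Lemma max_degree_miss x y z : (forall u, #|nbhd u| <= #|nbhd x|) -> F y z -> ~~ F x z ->
  exists2 w, F x w & ~~ F w y.
Proof.
move=> xmax yz xz.
case: (boolP [exists w, F x w && ~~ F w y]) => [/existsP [w /andP [xw wy]] | /existsPn yfull].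
  by exists w.
have : #|nbhd x| < #|nbhd y|.
  apply: proper_card; apply/properP; split; last by exists z; rewrite !inE.
  by apply/subsetP => u; rewrite !inE => xu; move: (yfull u); rewrite xu negbK F_sym.
by rewrite ltnNge xmax.
Qed.

(* A maximum-degree vertex x whose non-neighbourhood contains an edge yz lies
   on an induced 5-cycle x w1 y z w2. *)
Lemma C5_at_max_degree x y z : (forall u, #|nbhd u| <= #|nbhd x|) ->
  ~~ F x y -> ~~ F x z -> F y z ->
  exists c : nat -> 'I_n, forall i j, i < 5 -> j < 5 -> F (c i) (c j) = c5 i j.
Proof.
move=> xmax xy xz yz.
have yz_ne : y != z by apply/eqP => E; move: yz; rewrite E F_irr.
have xy_ne : x != y by apply/eqP => E; move: xz; rewrite E yz.
have xz_ne : x != z by apply/eqP => E; move: xy; rewrite E F_sym yz.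
have towards w : F x w -> F w y || F w z.
  move=> xw; have xw_ne : x != w by apply/eqP => E; move: xw; rewrite E F_irr.
  have wy_ne : w != y by apply/eqP => E; move: xy; rewrite -E xw.
  have wz_ne : w != z by apply/eqP => E; move: xz; rewrite -E xw.
  have U : uniq [:: x; w; y; z] by rewrite /= !inE !negb_or xw_ne xy_ne xz_ne wy_ne wz_ne yz_ne.
  by have := no_induced_matching U xw yz; rewrite (negbTE xy) (negbTE xz).
have [w2 xw2 w2y] := max_degree_miss xmax yz xz.
have [w1 xw1 w1z] := max_degree_miss xmax (y := z) (z := y) (etrans (F_sym z y) yz) xy.
have w1y : F w1 y by move: (towards w1 xw1); rewrite (negbTE w1z) orbF.
have w2z : F w2 z by move: (towards w2 xw2); rewrite (negbTE w2y).
have w12 : F w1 w2 = false by apply/negP => w12; apply: (triangle_free xw1 w12).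
exists (nth x [:: x; w1; y; z; w2]) => i j i5 j5.
move: (negbTE xy) (negbTE xz) (negbTE w1z) (negbTE w2y) => xy' xz' w1z' w2y'.
case: i i5 => [|[|[|[|[|i]]]]] // _; case: j j5 => [|[|[|[|[|j]]]]] // _;
  rewrite /= ?F_irr ?xw1 ?xw2 ?xy' ?xz' ?w1y ?w1z' ?w12 ?yz ?w2y' ?w2z //;
  by rewrite F_sym ?F_irr ?xw1 ?xw2 ?xy' ?xz' ?w1y ?w1z' ?w12 ?yz ?w2y' ?w2z.
Qed.

(* If the non-neighbourhood of x is independent, then so is nbhd x plus v
   (no triangles), and these two sets cover n + 1 vertex slots. *)
Lemma split_bound x : {in ~: nbhd x &, forall y z, F y z = false} -> h_value n <= h.
Proof.
move=> coind.
have vN : v \notin nbhd x by rewrite inE F_sym v_isolated.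
have hN : 1 + #|nbhd x| <= h.
  have := cardsU1 v (nbhd x); rewrite vN => <-; apply: independent_le_h.
  move=> a b; rewrite !inE => /orP [/eqP -> | xa] /orP [/eqP -> | xb];
    rewrite ?v_isolated ?(F_sym _ v) ?v_isolated //.
  by apply/negP => ab; apply: (triangle_free xa ab).
have hC : #|~: nbhd x| <= h by apply: independent_le_h.
have cover : #|nbhd x| + #|~: nbhd x| = n by rewrite cardsC card_ord.
by rewrite /h_value; case: ifP => _; lia.
Qed.

(* The lower bound for graphs: take x of maximum degree; an edge among its
   non-neighbours yields an induced C5, otherwise split_bound applies. *)
Lemma graph_bound : h_value n <= h.
Proof.
have [x _ xmax] := @arg_maxnP _ v predT (fun u => #|nbhd u|) isT.
case: (boolP [exists y, exists z, [&& ~~ F x y, ~~ F x z & F y z]]).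
  move=> /existsP [y /existsP [z /and3P [xy xz yz]]].
  have [c c_C5] := C5_at_max_degree (fun u => xmax u isT) xy xz yz.
  exact: C5_bound c_C5.
move=> /existsPn coind; apply: (split_bound (x := x)) => y z; rewrite !inE => xy xz.
by apply/negbTE; have := existsPn (coind y) z; rewrite xy xz.
Qed.

End OddQuadFreeGraph.

Section LinkGraph.

Variables (n : nat) (E : {set {set 'I_n}}) (v : 'I_n).
Hypothesis E_uniform : uniform 3 E.
Hypothesis E_Qfree : Qfree E [:: (4, 0); (4, 1); (4, 3)].

Definition link (x y : 'I_n) : bool := [&& x != y, x != v, y != v & [set v; x; y] \notin E].

Lemma link_sym x y : link x y = link y x.
Proof. by rewrite /link eq_sym set3_swap23; case: (y != x); case: (x != v); case: (y != v). Qed.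

Lemma link_irr x : link x x = false.
Proof. by rewrite /link eqxx. Qed.

Lemma link_v x : link v x = false.
Proof. by rewrite /link eqxx andbF. Qed.

Definition quad_count (a b c d : 'I_n) : nat :=
  ([set a; b; c] \in E) + ([set a; b; d] \in E) + ([set a; c; d] \in E) + ([set b; c; d] \in E).

Lemma quad_count_even_pos a b c d : uniq [:: a; b; c; d] ->
  ~~ odd (quad_count a b c d) && (0 < quad_count a b c d).
Proof.
move=> U; have E3 := uniform_card E_uniform.
have no_induced f : (4, f) \in [:: (4, 0); (4, 1); (4, 3)] -> quad_count a b c d != f.
  move=> fQ; have /existsPn /(_ [set a; b; c; d]) := allP E_Qfree _ fQ.
  by rewrite card_set4 // card_triples_in4.
move: (no_induced 0 isT) (no_induced 1 isT) (no_induced 3 isT); rewrite /quad_count.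
by case: (_ \in E); case: (_ \in E); case: (_ \in E); case: (_ \in E).
Qed.

Lemma edge_parity_at_v y z : uniq [:: v; y; z] ->
  ([set v; y; z] \in E) = ~~ odd_triple link v y z.
Proof.
move=> /uniq3E [vy vz yz].
by rewrite /odd_triple !link_v /link yz !(eq_sym _ v) vy vz /=; case: (_ \in E).
Qed.

(* Edges avoiding v: the parity of the 4-set {v, x, y, z} decides them. *)
Lemma edge_parity_off_v x y z : uniq [:: v; x; y; z] ->
  ([set x; y; z] \in E) = ~~ odd_triple link x y z.
Proof.
move=> U; have := quad_count_even_pos U; have [[vx vy vz xy xz] yz] := uniq4E U.
rewrite /quad_count /odd_triple /link xy xz yz !(eq_sym _ v) vx vy vz /=.
by case: ([set v; x; y] \in E); case: ([set v; x; z] \in E); case: ([set v; y; z] \in E);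
  case: ([set x; y; z] \in E).
Qed.

Lemma edge_parity x y z : uniq [:: x; y; z] -> ([set x; y; z] \in E) = ~~ odd_triple link x y z.
Proof.
move=> U; have [xy xz yz] := uniq3E U.
case: (eqVneq x v) => [xv | xv]; first by rewrite xv edge_parity_at_v -?xv.
case: (eqVneq y v) => [yv | yv].
  rewrite yv set3_swap12 edge_parity_at_v /odd_triple;
    last by rewrite -yv /= !inE !negb_or eq_sym xy xz yz.
  by rewrite (link_sym x v) !link_v !add0n addn0.
case: (eqVneq z v) => [zv | zv].
  rewrite zv set3_swap23 set3_swap12 edge_parity_at_v /odd_triple;
    last by rewrite -zv /= !inE !negb_or !(eq_sym z) xz yz xy.
  by rewrite (link_sym x v) (link_sym y v) !link_v !add0n !addn0.
by apply: edge_parity_off_v; rewrite /= !inE !negb_or !(eq_sym v) xv yv zv xy xz yz.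
Qed.

(* Every 4-set contains an edge, so the link graph has no odd quadruple. *)
Lemma link_no_odd_quad a b c d : uniq [:: a; b; c; d] -> ~~ odd_quad link a b c d.
Proof.
move=> U; have [[ab ac ad bc bd] cd] := uniq4E U.
have := quad_count_even_pos U; rewrite /quad_count /odd_quad.
rewrite !edge_parity /= ?inE ?negb_or ?ab ?ac ?ad ?bc ?bd ?cd //.
by case: (odd_triple _ a b c); case: (odd_triple _ a b d); case: (odd_triple _ a c d);
  case: (odd_triple _ b c d).
Qed.

Lemma even_set_hom (S : {set 'I_n}) : even_set link S -> #|S| <= hom_num 3 E.
Proof.
move=> evenS; apply: (@leq_bigmax_cond _ (homogeneous 3 E) (fun S => #|S|)).
apply/orP; left; apply/forallP => e; apply/implyP => /andP [eS /eqP e3].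
have [a [b [c [U eE]]]] := card3P e3; rewrite eE edge_parity //.
by apply: evenS => //; apply: (subsetP eS); rewrite eE !inE eqxx ?orbT.
Qed.

Lemma Qfree_lower_bound : h_value n <= hom_num 3 E.
Proof.
apply: (graph_bound (F := link) (v := v)) => //.
- exact: link_sym.
- exact: link_irr.
- exact: link_v.
- exact: link_no_odd_quad.
- exact: even_set_hom.
Qed.

End LinkGraph.

(* The extremal construction: vertex x gets the type x mod 6, and the edges
   are the triples that are even for the blow-up of the type graph. *)

Definition residue_type (n : nat) (x : 'I_n) : nat := val x %% 6.

Definition blowup_adj (n : nat) (x y : 'I_n) : bool :=
  type_adj (residue_type x) (residue_type y).

Definition blowup (n : nat) : {set {set 'I_n}} :=
  [set e | [exists a, exists b, exists c,
     [&& e == [set a; b; c], uniq [:: a; b; c] & ~~ odd_triple (@blowup_adj n) a b c]]].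

Lemma blowup_adj_sym n (x y : 'I_n) : blowup_adj x y = blowup_adj y x.
Proof. exact: type_adj_sym. Qed.

Lemma blowup_triple n (a b c : 'I_n) : uniq [:: a; b; c] ->
  ([set a; b; c] \in blowup n) = ~~ odd_triple (@blowup_adj n) a b c.
Proof.
move=> U; rewrite inE; apply/existsP/idP => [[a' /existsP [b' /existsP [c' H]]] | even_abc].
  by move: H => /and3P [/eqP abc U']; rewrite (odd_triple_set (@blowup_adj_sym n) U U' abc).
by exists a; apply/existsP; exists b; apply/existsP; exists c; rewrite eqxx U even_abc.
Qed.

Lemma blowup_uniform n : uniform 3 (blowup n).
Proof.
apply/forallP => e; apply/implyP; rewrite inE.
by move=> /existsP [a /existsP [b /existsP [c /and3P [/eqP -> U _]]]]; rewrite card_set3.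
Qed.

(* Exhaustive check: the type graph has no odd quadruple, even allowing
   repeated types. *)
Definition type_quad_check : bool :=
  all (fun t1 => all (fun t2 => all (fun t3 => all (fun t4 =>
    ~~ odd_quad type_adj t1 t2 t3 t4) (iota 0 6)) (iota 0 6)) (iota 0 6)) (iota 0 6).

Lemma type_quad_check_ok : type_quad_check.
Proof. vm_cast_no_check (erefl true). Qed.

Lemma blowup_no_odd_quad n (a b c d : 'I_n) : ~~ odd_quad (@blowup_adj n) a b c d.
Proof.
have type6 (x : 'I_n) : residue_type x \in iota 0 6 by rewrite mem_iota ltn_pmod.
exact: (allP (allP (allP (allP type_quad_check_ok _ (type6 a)) _ (type6 b)) _ (type6 c))
  _ (type6 d)).
Qed.

Lemma blowup_Qfree n : Qfree (blowup n) [:: (4, 0); (4, 1); (4, 3)].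
Proof.
have E3 := uniform_card (blowup_uniform n).
have no_induced f : f \in [:: 0; 1; 3] -> ~~ has_induced (blowup n) 4 f.
  move=> f_bad; apply/existsPn => S; apply/negP => /andP [/eqP S4 /eqP Sf].
  have [a [b [c [d [U SE]]]]] := card4P S4; have [[ab ac ad bc bd] cd] := uniq4E U.
  move: Sf; rewrite SE card_triples_in4 // !blowup_triple /=
    ?inE ?negb_or ?ab ?ac ?ad ?bc ?bd ?cd //.
  have := blowup_no_odd_quad a b c d; rewrite /odd_quad /odd_triple => + count_f; move: f_bad.
  rewrite -count_f {count_f}.
  by case: (blowup_adj a b); case: (blowup_adj a c); case: (blowup_adj a d);
    case: (blowup_adj b c); case: (blowup_adj b d); case: (blowup_adj c d).
by rewrite /Qfree /= !no_induced.
Qed.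

Definition even_types (P : seq nat) : bool :=
  all (fun t1 => all (fun t2 => all (fun t3 =>
    [&& t1 != t2, t1 != t3 & t2 != t3] ==> ~~ odd_triple type_adj t1 t2 t3) P) P) P.

Definition max_even_types : seq (seq nat) :=
  [:: [:: 1; 2; 3]; [:: 2; 3; 4]; [:: 3; 4; 5]; [:: 4; 5; 1]; [:: 5; 1; 2];
      [:: 0; 1; 3]; [:: 0; 2; 4]; [:: 0; 3; 5]; [:: 0; 4; 1]; [:: 0; 5; 2]].

Definition max_even_types_check : bool :=
  all (fun bs => even_types [seq t <- iota 0 6 | nth false bs t] ==>
     has (fun M => all (fun t => t \in M) [seq t <- iota 0 6 | nth false bs t]) max_even_types)
    (all_rows 6).

Lemma max_even_types_check_ok : max_even_types_check.
Proof. vm_cast_no_check (erefl true). Qed.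

Lemma max_even_typesP (P : seq nat) : {subset P <= iota 0 6} -> even_types P ->
  exists2 M, M \in max_even_types & {subset P <= M}.
Proof.
move=> P6 evenP; set Q := [seq t <- iota 0 6 | t \in P].
have QP : Q =i P by move=> t; rewrite mem_filter andb_idr // => /P6.
have evenQ : even_types Q.
  rewrite /even_types (eq_all_r QP); apply: sub_all evenP => t1.
  rewrite (eq_all_r QP); apply: sub_all => t2; by rewrite (eq_all_r QP).
have bits : size [seq t \in P | t <- iota 0 6] = 6 by rewrite size_map size_iota.
have := allP max_even_types_check_ok _ (all_rowsP bits).
have -> : [seq t <- iota 0 6 | nth false [seq t \in P | t <- iota 0 6] t] = Q.
  by apply: eq_in_filter => t; rewrite mem_iota => /andP [_ t6]; rewrite nth_map_iota.
rewrite evenQ => /hasP [M MM /allP QM]; exists M => // t tP; apply: QM; by rewrite QP.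
Qed.

Definition residue_class (n t : nat) : {set 'I_n} := [set x : 'I_n | residue_type x == t].

Lemma card_residue_class n t : t < 6 -> #|residue_class n t| = n %/ 6 + (t < n %% 6).
Proof.
move=> t6; rewrite -sum1_card big_mkcond /=.
rewrite (eq_bigr (fun i : 'I_n => nat_of_bool (val i %% 6 == t))); last first.
  by move=> i _; rewrite inE; case: (_ == _).
rewrite -(big_mkord xpredT (fun i => nat_of_bool (i %% 6 == t))).
elim: n => [|n IH]; first by rewrite big_geq.
rewrite big_nat_recr //= IH.
case: (ltnP t (n %% 6)) => H1; case: (eqVneq (n %% 6) t) => H2;
  case: (ltnP t (n.+1 %% 6)) => H3; lia.
Qed.

Lemma max_even_types_small n M : M \in max_even_types ->
  \sum_(t <- M) #|residue_class n t| <= h_value n.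
Proof.
rewrite !inE => /or4P [| | |/or4P [| | |/or4P [| | |]]] /eqP ->; rewrite !big_cons big_nil;
  rewrite !card_residue_class // /h_value /dvdn;
  move: (ltn_pmod n (isT : 0 < 6)) (divn_eq n 6); move: (n %/ 6) (n %% 6) => q r r6 qr;
  by case: r r6 qr => [|[|[|[|[|[|r]]]]]] //= _ qr; lia.
Qed.

Lemma leq_sum_subset (I : eqType) (f : I -> nat) (P M : seq I) :
  uniq P -> uniq M -> {subset P <= M} -> \sum_(t <- P) f t <= \sum_(t <- M) f t.
Proof.
move=> UP UM PM.
have /(perm_big _) -> : perm_eq P [seq t <- M | t \in P].
  apply: uniq_perm => //; first exact: filter_uniq.
  by move=> t; rewrite mem_filter; case: (boolP (t \in P)) => // /PM ->.
rewrite big_filter big_mkcond /=; apply: leq_sum => t _; by case: (_ \in _).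
Qed.

(* A clique of the blow-up uses an even set of types, hence lies in the
   classes of one maximal even set of types. *)
Lemma blowup_clique_small n (S : {set 'I_n}) : is_clique 3 (blowup n) S -> #|S| <= h_value n.
Proof.
move=> cliqueS; pose P := [seq t <- iota 0 6 | [exists x in S, residue_type x == t]].
have P6 : {subset P <= iota 0 6} by move=> t; rewrite mem_filter => /andP [].
have inP t : t \in P -> exists2 x, x \in S & residue_type x = t.
  by rewrite mem_filter => /andP [/existsP [x /andP [xS /eqP xt]] _]; exists x.
have ne (a b : 'I_n) : residue_type a != residue_type b -> a != b by apply: contraNneq => ->.
have evenP : even_types P.
  apply/allP => _ /inP [x1 x1S <-]; apply/allP => _ /inP [x2 x2S <-].
  apply/allP => _ /inP [x3 x3S <-]; apply/implyP => /and3P [t12 t13 t23].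
  have U : uniq [:: x1; x2; x3] by rewrite /= !inE !negb_or !ne.
  rewrite -[odd_triple type_adj _ _ _]/(odd_triple (@blowup_adj n) x1 x2 x3) -blowup_triple //.
  move/forallP: cliqueS => /(_ [set x1; x2; x3]) /implyP; apply; rewrite card_set3 // eqxx andbT.
  by apply/subsetP => y; rewrite !inE -!orbA => /or3P [] /eqP ->.
have [M MM PM] := max_even_typesP P6 evenP.
have UP : uniq P by rewrite filter_uniq ?iota_uniq.
apply: leq_trans (max_even_types_small n MM).
apply: leq_trans (leq_sum_subset _ UP (allP (isT : all uniq max_even_types) _ MM) PM).
rewrite -card_preimage_seq //; apply: subset_leq_card; apply/subsetP => x xS.
rewrite inE mem_filter; apply/andP; split; first by apply/existsP; exists x; rewrite xS eqxx.
by rewrite mem_iota /residue_type ltn_pmod.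
Qed.

(* Any four vertices of the blow-up span an edge, so cocliques are small. *)
Lemma blowup_coclique_small n (S : {set 'I_n}) : is_coclique 3 (blowup n) S -> #|S| <= 3.
Proof.
move=> cocliqueS; rewrite leqNgt; apply/negP => /card_ge4P [a [b [c [d [U aS bS cS dS]]]]].
have [[ab ac ad bc bd] cd] := uniq4E U.
have odd3 x y z : x \in S -> y \in S -> z \in S -> x != y -> x != z -> y != z ->
    odd_triple (@blowup_adj n) x y z.
  move=> xS yS zS xy xz yz; have Uxyz : uniq [:: x; y; z] by rewrite /= !inE !negb_or xy xz yz.
  rewrite -[odd_triple _ _ _ _]negbK -blowup_triple //.
  move/forallP: cocliqueS => /(_ [set x; y; z]) /implyP; apply; rewrite card_set3 // eqxx andbT.
  by apply/subsetP => w; rewrite !inE -!orbA => /or3P [] /eqP ->.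
by have := blowup_no_odd_quad a b c d; rewrite /odd_quad !odd3.
Qed.

Lemma blowup_hom_small n : 4 <= n -> hom_num 3 (blowup n) <= h_value n.
Proof.
move=> n4; apply/bigmax_leqP => S /orP [cliqueS | cocliqueS].
  exact: blowup_clique_small.
apply: leq_trans (blowup_coclique_small cocliqueS) _.
by rewrite /h_value; case: ifP => [/dvdnP [k nk] | _]; lia.
Qed.

Lemma bigmin_le (I : finType) (P : pred I) (f : I -> nat) x0 i :
  P i -> \big[minn/x0]_(j | P j) f j <= f i.
Proof.
move=> Pi; have : i \in index_enum I by rewrite mem_index_enum.
elim: (index_enum I) => [|j r IH] //; rewrite big_cons inE => /orP [/eqP <- | ir].
  by rewrite Pi geq_minl.
by case: (P j) => /=; [apply: leq_trans (geq_minr _ _) (IH ir) | apply: IH].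
Qed.

Theorem mainTheorem11 (n : nat) : 4 <= n ->
  h_r 3 n [:: (4, 0); (4, 1); (4, 3)] =
  (if 6 %| n then n %/ 2 else (n + 2) %/ 2).
Proof.
move=> n4; rewrite -/(h_value n); apply/eqP; rewrite eqn_leq; apply/andP; split.
  apply: leq_trans (blowup_hom_small n4).
  apply: (bigmin_le (P := fun E => uniform 3 E && Qfree E _)).
  by rewrite blowup_uniform blowup_Qfree.
have v : 'I_n by exists 0; lia.
apply: (big_ind (fun k => h_value n <= k)) => [| k l | E /andP [E3 EQ]].
- by rewrite /h_value; case: ifP => _; lia.
- by rewrite leq_min => -> ->.
- exact: Qfree_lower_bound v E3 EQ.
Qed.
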